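(* Let $A=\{a_0,a_1,\dots,a_{k-1}\}\subseteq\mathcal{C}_n$ with $a_0<\dots<a_{k-1}$ and let $m\in\{0,\dots,k-1\}$. Then the set $\mathcal{DN}^{\,1}_m=\{\overline{a_m}\}\cup\mathcal{L}^{n-1}_{a_m}\left(\sigma^{(n)}_k(A)\right)$ is a subsemiring of the simplex $\sigma^{(n)}_k(A)$.
   Context: $\mathcal{C}_n=\{0,1,\dots,n-1\}$ with its usual order; $\widehat{\mathcal{E}}_{\mathcal{C}_n}$ is the set of all order-preserving maps $\mathcal{C}_n\to\mathcal{C}_n$ (not required to fix $0$), a semiring with $(\alpha+\beta)(x)=\max(\alpha(x),\beta(x))$ and $(\alpha\cdot\beta)(x)=\beta(\alpha(x))$. The simplex $\sigma^{(n)}_k(A)$ is the set of all $\alpha\in\widehat{\mathcal{E}}_{\mathcal{C}_n}$ with $\mathrm{im}(\alpha)\subseteq A$ (a subsemiring). $\overline{x}$ is the constant map with value $x$. For $s\in\{0,\dots,n-1\}$, the layer $\mathcal{L}^{s}_{a_m}\left(\sigma^{(n)}_k(A)\right)$ is the set of $\alpha\in\sigma^{(n)}_k(A)$ with exactly $s$ elements $i\in\mathcal{C}_n$ satisfying $\alpha(i)=a_m$. A subsemiring is a nonempty subset closed under $+$ and $\cdot$. *)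

From mathcomp Require Import all_boot.
Set Implicit Arguments. Unset Strict Implicit. Unset Printing Implicit Defensive.

(* Maps C_n -> C_n, with C_n = 'I_n = {0,...,n-1} ordered as naturals. *)
Notation map_n n := {ffun 'I_n -> 'I_n}.

Definition order_preserving n (f : map_n n) : bool :=
  [forall i : 'I_n, forall j : 'I_n, (i <= j) ==> (f i <= f j)].

Definition Ehat n : {set map_n n} := [set f | order_preserving f].

Definition addE n (f g : map_n n) : map_n n :=
  [ffun x => if f x <= g x then g x else f x].

Definition mulE n (f g : map_n n) : map_n n := [ffun x => g (f x)].

(* sigma^{(n)}_k(A): order-preserving maps with image in A (k = #|A|) *)
Definition simplex n (A : {set 'I_n}) : {set map_n n} :=
  [set f in Ehat n | [forall x, f x \in A]].

(* a_m : the m-th smallest element of A (0-indexed), as a natural number *)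
Definition elem_at n (A : {set 'I_n}) (m : nat) : nat :=
  nth 0 (sort leq [seq val x | x <- enum A]) m.

Definition const_set n (a : nat) : {set map_n n} :=
  [set f in Ehat n | [forall i, val (f i) == a]].

Definition layer n (s a : nat) (S : {set map_n n}) : {set map_n n} :=
  [set f in S | #|[set i | val (f i) == a]| == s].

Definition DN1 n (A : {set 'I_n}) (m : nat) : {set map_n n} :=
  const_set n (elem_at A m) :|: layer n.-1 (elem_at A m) (simplex A).

Definition is_subsemiring n (S T : {set map_n n}) : Prop :=
  [/\ S \subset T, S != set0,
      (forall f g, f \in S -> g \in S -> addE f g \in S) &
      (forall f g, f \in S -> g \in S -> mulE f g \in S)].

From mathcomp Require Import all_boot.
From mathcomp Require Import zify.
Set Implicit Arguments. Unset Strict Implicit.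

(* With a := a_m, the set DN^1_m consists of the maps of the simplex whose
   a-support (the points not sent to a) has at most one element.  Such a map
   f fixes a: if f a < a then f 0 <= f a < a, and if f a > a then
   f (n-1) >= f a > a, giving two points outside the value a.  Hence
   x |-> g (f x) can leave the value a only where f does.  For the sum, if
   i < j were both in the support of max f g, monotonicity and the fact that
   each of f, g takes the value a at i or at j force max f g to equal a at
   i or at j. *)

Lemma order_preservingP n (f : map_n n) :
  reflect {homo f : i j / i <= j} (order_preserving f).
Proof.
apply: (iffP forallP) => [f_mono i j | f_mono i].
  by move/forallP/(_ j)/implyP: (f_mono i).
by apply/forallP => j; apply/implyP/f_mono.
Qed.

Lemma simplexP n (A : {set 'I_n}) (f : map_n n) :
  reflect ({homo f : i j / i <= j} /\ forall x, f x \in A) (f \in simplex A).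
Proof.
rewrite !inE; apply: (iffP andP) => [[/order_preservingP ? /forallP ?] // | [? ?]].
by split; [apply/order_preservingP | apply/forallP].
Qed.

Lemma elem_at_mem n (A : {set 'I_n}) m :
  m < #|A| -> exists2 a : 'I_n, a \in A & val a = elem_at A m.
Proof.
move=> ltmA; have : elem_at A m \in [seq val x | x <- enum A].
  by rewrite -(mem_sort leq) mem_nth // size_sort size_map -cardE.
by case/mapP => a; rewrite mem_enum; exists a.
Qed.

Lemma val_addE n (f g : map_n n) x : val (addE f g x) = maxn (f x) (g x).
Proof. by rewrite ffunE; case: leqP => fg /=; lia. Qed.

Lemma simplex_addE n (A : {set 'I_n}) (f g : map_n n) :
  f \in simplex A -> g \in simplex A -> addE f g \in simplex A.
Proof.
move=> /simplexP[f_mono f_A] /simplexP[g_mono g_A]; apply/simplexP; split.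
  move=> i j le_ij; rewrite !val_addE geq_max !leq_max.
  by rewrite f_mono ?g_mono ?orbT.
by move=> x; rewrite ffunE; case: ifP => _; [exact: g_A | exact: f_A].
Qed.

Lemma simplex_mulE n (A : {set 'I_n}) (f g : map_n n) :
  f \in simplex A -> g \in simplex A -> mulE f g \in simplex A.
Proof.
move=> /simplexP[f_mono _] /simplexP[g_mono g_A]; apply/simplexP.
by split=> [i j le_ij | x]; rewrite !ffunE ?g_A //; apply/g_mono/f_mono.
Qed.

Section Support.

Variables (n : nat) (a : 'I_n).
Implicit Types f g : map_n n.

Lemma support_le1_pair f i j :
  #|a.-support f| <= 1 -> i != j -> (f i == a) || (f j == a).
Proof.
move=> /card_le1_eqP supp_f; apply: contraR; rewrite negb_or => /andP[fi fj].
by apply/eqP/supp_f.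
Qed.

Lemma support_le1_fixed f :
  {homo f : i j / i <= j} -> #|a.-support f| <= 1 -> f a = a.
Proof.
move=> f_mono supp_f; have n_gt0 : 0 < n by apply: leq_ltn_trans (ltn_ord a).
apply/val_inj/eqP; rewrite eqn_leq; apply/andP; split.
  have lt_top : n.-1 < n by rewrite ltn_predL.
  pose top := Ordinal lt_top.
  have [<- | top_ne_a] := eqVneq top a; first by rewrite /= -ltnS prednK.
  case/orP: (support_le1_pair supp_f top_ne_a) => /eqP f_top; last by rewrite f_top.
  have a_le_top : a <= top by rewrite /= -ltnS prednK.
  by apply: (leq_trans (f_mono a top a_le_top)); rewrite f_top.
pose bot := Ordinal n_gt0.
have [<- | bot_ne_a] := eqVneq bot a; first by [].
case/orP: (support_le1_pair supp_f bot_ne_a) => /eqP f_bot; last by rewrite f_bot.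
by apply: (leq_trans _ (f_mono bot a (leq0n a))); rewrite f_bot.
Qed.

Lemma support_le1_addE f g :
  {homo f : i j / i <= j} -> {homo g : i j / i <= j} ->
  #|a.-support f| <= 1 -> #|a.-support g| <= 1 -> #|a.-support (addE f g)| <= 1.
Proof.
move=> f_mono g_mono supp_f supp_g.
have max_a (i j : 'I_n) : i < j -> (maxn (f i) (g i) == a) || (maxn (f j) (g j) == a).
  move=> lt_ij; have ne_ij : i != j by rewrite neq_ltn lt_ij.
  move: (f_mono _ _ (ltnW lt_ij)) (g_mono _ _ (ltnW lt_ij)).
  move: (support_le1_pair supp_f ne_ij) (support_le1_pair supp_g ne_ij).
  rewrite -!val_eqE /=; lia.
apply/card_le1_eqP => i j; rewrite !supportE -!val_eqE /= !val_addE => si sj.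
case: (ltngtP i j) => [lt_ij | lt_ji | /val_inj //].
  by have := max_a _ _ lt_ij; rewrite (negbTE si) (negbTE sj).
by have := max_a _ _ lt_ji; rewrite (negbTE si) (negbTE sj).
Qed.

Lemma support_le1_mulE f g :
  {homo g : i j / i <= j} ->
  #|a.-support f| <= 1 -> #|a.-support g| <= 1 -> #|a.-support (mulE f g)| <= 1.
Proof.
move=> g_mono supp_f supp_g; apply: leq_trans supp_f.
apply/subset_leq_card/subsetP => x; rewrite !supportE ffunE.
by apply: contra => /eqP ->; apply/eqP/support_le1_fixed.
Qed.

Lemma support_const : #|a.-support ([ffun=> a] : map_n n)| = 0.
Proof. by apply: eq_card0 => x; rewrite supportE ffunE eqxx. Qed.

Lemma card_preim_val f : #|[set i | val (f i) == val a]| = n - #|a.-support f|.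
Proof.
have := cardsC [set i | val (f i) == val a].
rewrite card_ord (eq_card (_ : ~: _ =i a.-support f)) => [|i].
  exact: canRL (addnK _).
by rewrite !inE val_eqE.
Qed.

End Support.

Lemma simplex_const n (A : {set 'I_n}) (a : 'I_n) : a \in A -> [ffun=> a] \in simplex A.
Proof. by move=> Aa; apply/simplexP; split=> [i j _ | x]; rewrite !ffunE. Qed.

Lemma mem_const_set n (a : 'I_n) (f : map_n n) : (f \in const_set n a) = (f == [ffun=> a]).
Proof.
rewrite inE; apply/andP/eqP => [[_ /forallP f_a] | ->].
  by apply/ffunP => i; rewrite ffunE; apply/val_inj/eqP.
split; last by apply/forallP => i; rewrite ffunE.
by rewrite inE; apply/order_preservingP => i j _; rewrite !ffunE.
Qed.

Lemma mem_layer n (a : 'I_n) (S : {set map_n n}) (f : map_n n) :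
  (f \in layer n.-1 a S) = (f \in S) && (#|a.-support f| == 1).
Proof.
have n_gt0 : 0 < n by apply: leq_ltn_trans (ltn_ord a).
rewrite inE card_preim_val; congr (_ && _).
have : #|a.-support f| <= n by rewrite -[X in _ <= X]card_ord max_card.
lia.
Qed.

Lemma mem_DN1 n (A : {set 'I_n}) m (a : 'I_n) (f : map_n n) :
  a \in A -> val a = elem_at A m ->
  (f \in DN1 A m) = (f \in simplex A) && (#|a.-support f| <= 1).
Proof.
move=> Aa val_a; rewrite /DN1 -val_a inE mem_const_set mem_layer.
have [-> | f_ne_a] := eqVneq f [ffun=> a]; first by rewrite simplex_const ?support_const.
rewrite /= leq_eqVlt ltnS leqn0.
suff -> : (#|a.-support f| == 0) = false by rewrite orbF.
apply: contraNF f_ne_a => /eqP/card0_eq supp_f; apply/eqP/ffunP => i.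
by rewrite ffunE; apply/eqP; move: (supp_f i); rewrite supportE => /negbFE.
Qed.

Theorem proposition2 (n : nat) (A : {set 'I_n}) (m : nat) :
  m < #|A| -> is_subsemiring (DN1 A m) (simplex A).
Proof.
move=> lt_mA; have [a Aa val_a] := elem_at_mem lt_mA.
have memDN1 f := mem_DN1 f Aa val_a.
split.
- by apply/subsetP => f; rewrite memDN1 => /andP[].
- by apply/set0Pn; exists [ffun=> a]; rewrite memDN1 simplex_const ?support_const.
- move=> f g; rewrite !memDN1 => /andP[Sf supp_f] /andP[Sg supp_g].
  have [f_mono _] := simplexP _ _ Sf; have [g_mono _] := simplexP _ _ Sg.
  by rewrite simplex_addE ?support_le1_addE.
- move=> f g; rewrite !memDN1 => /andP[Sf supp_f] /andP[Sg supp_g].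
  have [g_mono _] := simplexP _ _ Sg.
  by rewrite simplex_mulE ?support_le1_mulE.
Qed.
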